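(* For all $t,s,r\in\Lambda^\infty$: if $t\to^\infty_{\beta\bot}s$ and $s\to^*_\beta r$, then $t\to^\infty_{\beta\bot}r$.
   Context: Fix an infinite set $V$ of variables and a set $C$ of constants with $V\cap C=\emptyset$, containing a distinguished constant $\bot$. $\Lambda^\infty$ is the set of infinitary lambda-terms: all finite and infinite terms generated coinductively by $t ::= c\mid x\mid t\,t\mid\lambda x.t$, identified up to $\alpha$-equivalence; $s[t/x]$ is capture-avoiding substitution; $\equiv$ is identity; an atom is a variable or constant. For $R\subseteq\Lambda^\infty\times\Lambda^\infty$, the compatible closure $\to_R$ is the least relation with $(s,t)\in R\Rightarrow s\to_R t$ and $s\to_R s'\Rightarrow st\to_R s't,\ ts\to_R ts',\ \lambda x.s\to_R\lambda x.s'$. $\to_\beta$ is the compatible closure of $R_\beta=\{((\lambda x.s)t,s[t/x])\}$ and $\to^*_\beta$ its reflexive-transitive closure. A term is in head normal form (hnf) if it is $\lambda x_1\ldots x_m.\,a\,t_1\ldots t_n$ ($m,n\ge0$, $a$ an atom, $a\not\equiv\bot$); $t$ has a hnf if $t\to^*_\beta t'$ for some $t'$ in hnf. $R_\bot=\{(t,\bot)\mid t\text{ has no hnf}, t\not\equiv\bot\}$; $\to_{\beta\bot}$ is the compatible closure of $R_\beta\cup R_\bot$. The infinitary closure $\to^\infty_{\beta\bot}$ is the greatest relation such that whenever $s\to^\infty_{\beta\bot}t$ (with $\to^*$ the reflexive-transitive closure of $\to_{\beta\bot}$): $t\equiv a$ atom and $s\to^*a$; or $t\equiv t_1't_2'$,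 $s\to^*t_1t_2$, $t_i\to^\infty_{\beta\bot}t_i'$; or $t\equiv\lambda x.r'$, $s\to^*\lambda x.r$, $r\to^\infty_{\beta\bot}r'$. *)

(* Infinitary lambda-terms as a coinductive type with
   de Bruijn indices (alpha-equivalence is built in); identity of
   (possibly infinite) terms is bisimilarity [bisim]. *)
From Stdlib Require Import Arith.

Set Implicit Arguments.

Section InfLambda.

Context (C : Type) (bot : C).

CoInductive term : Type :=
| Var : nat -> term
| Cst : C -> term
| App : term -> term -> term
| Lam : term -> term.

CoInductive bisim : term -> term -> Prop :=
| bisim_var n : bisim (Var n) (Var n)
| bisim_cst c : bisim (Cst c) (Cst c)
| bisim_app s1 s2 t1 t2 :
    bisim s1 t1 -> bisim s2 t2 -> bisim (App s1 s2) (App t1 t2)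
| bisim_lam s t : bisim s t -> bisim (Lam s) (Lam t).

CoFixpoint lift (d c : nat) (t : term) : term :=
  match t with
  | Var n => if n <? c then Var n else Var (n + d)
  | Cst a => Cst a
  | App t1 t2 => App (lift d c t1) (lift d c t2)
  | Lam t1 => Lam (lift d (S c) t1)
  end.

CoFixpoint subst (k : nat) (u : term) (t : term) : term :=
  match t with
  | Var n => if n <? k then Var n
             else if n =? k then lift k 0 u
             else Var (pred n)
  | Cst a => Cst a
  | App t1 t2 => App (subst k u t1) (subst k u t2)
  | Lam t1 => Lam (subst (S k) u t1)
  end.

Definition subst0 (s t : term) : term := subst 0 t s.

Definition R_beta (a b : term) : Prop :=
  exists s t, a = App (Lam s) t /\ bisim b (subst0 s t).

Inductive compat (R : term -> term -> Prop) : term -> term -> Prop :=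
| compat_base s t : R s t -> compat R s t
| compat_appl s s' t : compat R s s' -> compat R (App s t) (App s' t)
| compat_appr s s' t : compat R s s' -> compat R (App t s) (App t s')
| compat_lam s s' : compat R s s' -> compat R (Lam s) (Lam s').

Inductive star (R : term -> term -> Prop) : term -> term -> Prop :=
| star_refl s t : bisim s t -> star R s t
| star_step s u t : R s u -> star R u t -> star R s t.

Definition beta_step := compat R_beta.
Definition beta_star := star beta_step.

Inductive head_atom_app : term -> Prop :=
| haa_var n : head_atom_app (Var n)
| haa_cst c : c <> bot -> head_atom_app (Cst c)
| haa_app s t : head_atom_app s -> head_atom_app (App s t).

Inductive hnf : term -> Prop :=
| hnf_base t : head_atom_app t -> hnf t
| hnf_lam t : hnf t -> hnf (Lam t).

Definition has_hnf (t : term) : Prop :=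
  exists t', beta_star t t' /\ hnf t'.

Definition is_bot (t : term) : Prop :=
  match t with Cst c => c = bot | _ => False end.

Definition R_bot (a b : term) : Prop :=
  ~ has_hnf a /\ ~ is_bot a /\ b = Cst bot.

Definition R_beta_bot (a b : term) : Prop := R_beta a b \/ R_bot a b.

Definition bb_step := compat R_beta_bot.
Definition bb_star := star bb_step.

CoInductive bb_inf : term -> term -> Prop :=
| inf_var s n : bb_star s (Var n) -> bb_inf s (Var n)
| inf_cst s c : bb_star s (Cst c) -> bb_inf s (Cst c)
| inf_app s t1 t2 t1' t2' :
    bb_star s (App t1 t2) -> bb_inf t1 t1' -> bb_inf t2 t2' ->
    bb_inf s (App t1' t2')
| inf_lam s r r' :
    bb_star s (Lam r) -> bb_inf r r' -> bb_inf s (Lam r').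

End InfLambda.

(* A finite beta-reduction of the limit s contracts redexes at finite depth, so
   it suffices to treat one step.  Descending along the coinductive derivation
   of t ->> s to a redex (\x.P) q, we find that t reduces in finitely many steps
   to (\x.r) u with r ->> P and u ->> q; one more beta-step gives r[u/x], and
   r[u/x] ->> P[q/x] because ->> is closed under substitution.  That closure
   rests on finite beta-bot reduction being substitutive, and in particular on
   substitution not creating head normal forms: a reduction of u[v/x] to head
   normal form never inspects a subterm headed by x, so it can be replayed on u. *)

From Stdlib Require Import Arith Lia.

Arguments Var {C} _.

Section InfinitaryBeta.

Context {C : Type} (bot : C).
Notation term := (term C).
Implicit Types s t u v w a b : term.

Definition unfold_term t : term :=
  match t with Var n => Var n | Cst c => Cst c | App a b => App a b | Lam a => Lam a end.

Lemma unfold_term_eq t : t = unfold_term t.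
Proof. now destruct t. Qed.

Lemma lift_Var d c n : lift d c (Var n : term) = if n <? c then Var n else Var (n + d).
Proof. rewrite (unfold_term_eq (lift d c _)); simpl; now destruct (n <? c). Qed.

Lemma lift_Cst d c (x : C) : lift d c (Cst x) = Cst x.
Proof. now rewrite (unfold_term_eq (lift d c _)). Qed.

Lemma lift_App d c a b : lift d c (App a b) = App (lift d c a) (lift d c b).
Proof. now rewrite (unfold_term_eq (lift d c _)). Qed.

Lemma lift_Lam d c a : lift d c (Lam a) = Lam (lift d (S c) a).
Proof. now rewrite (unfold_term_eq (lift d c _)). Qed.

Lemma subst_Var k u n : subst k u (Var n : term) =
  if n <? k then Var n else if n =? k then lift k 0 u else Var (pred n).
Proof.
  rewrite (unfold_term_eq (subst k u _)); simpl.
  destruct (n <? k), (n =? k); try reflexivity.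
  now destruct (lift k 0 u).
Qed.

Lemma subst_Cst k u (x : C) : subst k u (Cst x) = Cst x.
Proof. now rewrite (unfold_term_eq (subst k u _)). Qed.

Lemma subst_App k u a b : subst k u (App a b) = App (subst k u a) (subst k u b).
Proof. now rewrite (unfold_term_eq (subst k u _)). Qed.

Lemma subst_Lam k u a : subst k u (Lam a) = Lam (subst (S k) u a).
Proof. now rewrite (unfold_term_eq (subst k u _)). Qed.

Lemma lift_Var_ge d c n : c <= n -> lift d c (Var n : term) = Var (n + d).
Proof. intro Hn; rewrite lift_Var; now destruct (Nat.ltb_spec n c); [lia|]. Qed.

Lemma subst_Var_lt k u n : n < k -> subst k u (Var n : term) = Var n.
Proof. intro Hn; rewrite subst_Var; now destruct (Nat.ltb_spec n k); [|lia]. Qed.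

Lemma subst_Var_eq k u : subst k u (Var k : term) = lift k 0 u.
Proof. now rewrite subst_Var, Nat.ltb_irrefl, Nat.eqb_refl. Qed.

Lemma subst_Var_gt k u n : k < n -> subst k u (Var n : term) = Var (pred n).
Proof.
  intro Hn; rewrite subst_Var.
  destruct (Nat.ltb_spec n k), (Nat.eqb_spec n k); now try lia.
Qed.

Ltac simp_struct := repeat rewrite ?lift_Cst, ?lift_App, ?lift_Lam,
                                   ?subst_Cst, ?subst_App, ?subst_Lam in *.

Ltac simp_var := repeat (rewrite ?lift_Var, ?subst_Var;
  repeat match goal with
  | |- context [?m <? ?n] => destruct (Nat.ltb_spec m n)
  | |- context [?m =? ?n] => destruct (Nat.eqb_spec m n)
  end); try (exfalso; lia).

Definition bisim_F (Q : term -> term -> Prop) t t' : Prop :=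
  (exists n, t = Var n /\ t' = Var n) \/
  (exists x, t = Cst x /\ t' = Cst x) \/
  (exists a1 a2 b1 b2, t = App a1 a2 /\ t' = App b1 b2 /\ Q a1 b1 /\ Q a2 b2) \/
  (exists a b, t = Lam a /\ t' = Lam b /\ Q a b).

Lemma bisim_coind (P : term -> term -> Prop) :
  (forall t t', P t t' -> bisim_F (fun a b => P a b \/ bisim a b) t t') ->
  forall t t', P t t' -> bisim t t'.
Proof.
  intro HP; cofix CIH; intros t t' H.
  destruct (HP t t' H) as [(n & -> & ->)|[(x & -> & ->)|
    [(a1 & a2 & b1 & b2 & -> & -> & [H1|H1] & [H2|H2])|(a & b & -> & -> & [H1|H1])]]];
    constructor; auto.
Qed.

Lemma bisim_F_of_bisim Q t t' : bisim t t' -> bisim_F (fun a b => Q a b \/ bisim a b) t t'.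
Proof.
  destruct 1; unfold bisim_F.
  - left; eauto.
  - right; left; eauto.
  - right; right; left; eauto 10.
  - right; right; right; eauto 10.
Qed.

Ltac bisim_F_intro := unfold bisim_F; first
  [ left; eexists; split; reflexivity
  | right; left; eexists; split; reflexivity
  | right; right; left; do 4 eexists; split; [reflexivity|split; [reflexivity|split]]
  | right; right; right; do 2 eexists; split; [reflexivity|split; [reflexivity|]] ].

Lemma bisim_refl t : bisim t t.
Proof.
  apply (bisim_coind eq); auto.
  intros t' _ <-; destruct t'; bisim_F_intro; auto.
Qed.

Lemma bisim_sym t t' : bisim t t' -> bisim t' t.
Proof.
  apply (bisim_coind (fun a b => bisim b a)).
  intros a b []; bisim_F_intro; auto.
Qed.

Lemma bisim_trans t u v : bisim t u -> bisim u v -> bisim t v.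
Proof.
  intros H1 H2; apply (bisim_coind (fun a c => exists b, bisim a b /\ bisim b c)); eauto.
  clear; intros a c (b & [] & H2); inversion H2; subst; bisim_F_intro; left; eauto.
Qed.

Lemma lift_bisim d c a b : bisim a b -> bisim (lift d c a) (lift d c b).
Proof.
  intro H; apply (bisim_coind (fun x y => exists c a b,
    x = lift d c a /\ y = lift d c b /\ bisim a b)); eauto 10.
  clear; intros x y (c & a & b & -> & -> & []); simp_struct.
  - apply bisim_F_of_bisim, bisim_refl.
  - bisim_F_intro.
  - bisim_F_intro; left; eauto 10.
  - bisim_F_intro; left; eauto 10.
Qed.

Lemma subst_bisim k u u' a a' :
  bisim a a' -> bisim u u' -> bisim (subst k u a) (subst k u' a').
Proof.
  intros H Hu; apply (bisim_coind (fun x y => exists k a a',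
    x = subst k u a /\ y = subst k u' a' /\ bisim a a')); eauto 10.
  clear H k a a'; intros x y (k & a & a' & -> & -> & []); simp_struct.
  - apply bisim_F_of_bisim; simp_var; auto using bisim_refl, lift_bisim.
  - bisim_F_intro.
  - bisim_F_intro; left; eauto 10.
  - bisim_F_intro; left; eauto 10.
Qed.

Ltac bisim_Var := match goal with
  |- bisim (Var ?m) (Var ?n) => replace m with n by lia; apply bisim_refl end.

Lemma lift_lift_add j c i m v :
  c <= m -> bisim (lift j (i + c) (lift m i v)) (lift (j + m) i v).
Proof.
  intro Hc; apply (bisim_coind (fun x y => exists i ci v,
    ci = i + c /\ x = lift j ci (lift m i v) /\ y = lift (j + m) i v)); eauto 10.
  clear -Hc; intros x y (i & ci & v & -> & -> & ->); destruct v; simp_struct.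
  - apply bisim_F_of_bisim; simp_var; bisim_Var.
  - bisim_F_intro.
  - bisim_F_intro; left; eauto 10.
  - bisim_F_intro; left; exists (S i), (S (i + c)), v; repeat split; lia.
Qed.

Lemma subst_lift_cancel j i m u v :
  j <= m -> bisim (subst (i + j) u (lift (S m) i v)) (lift m i v).
Proof.
  intro Hj; apply (bisim_coind (fun x y => exists i ji v,
    ji = i + j /\ x = subst ji u (lift (S m) i v) /\ y = lift m i v)); eauto 10.
  clear -Hj; intros x y (i & ji & v & -> & -> & ->); destruct v; simp_struct.
  - apply bisim_F_of_bisim; simp_var; bisim_Var.
  - bisim_F_intro.
  - bisim_F_intro; left; eauto 10.
  - bisim_F_intro; left; exists (S i), (S (i + j)), v; repeat split; lia.
Qed.

Lemma lift_lift_comm d c j i v :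
  bisim (lift d (i + j + c) (lift j i v)) (lift j i (lift d (i + c) v)).
Proof.
  apply (bisim_coind (fun x y => exists i cji ci v, cji = i + j + c /\ ci = i + c /\
    x = lift d cji (lift j i v) /\ y = lift j i (lift d ci v))); eauto 10.
  clear; intros x y (i & cji & ci & v & -> & -> & -> & ->); destruct v; simp_struct.
  - apply bisim_F_of_bisim; simp_var; bisim_Var.
  - bisim_F_intro.
  - bisim_F_intro; left; eauto 10.
  - bisim_F_intro; left; exists (S i), (S (i + j + c)), (S (i + c)), v; repeat split; lia.
Qed.

Lemma subst_lift_comm c j k u v :
  bisim (subst (c + j + k) u (lift j c v)) (lift j c (subst (c + k) u v)).
Proof.
  apply (bisim_coind (fun x y => exists c cjk ck v, cjk = c + j + k /\ ck = c + k /\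
    x = subst cjk u (lift j c v) /\ y = lift j c (subst ck u v))); eauto 10.
  clear; intros x y (c & cjk & ck & v & -> & -> & -> & ->); destruct v; simp_struct.
  - apply bisim_F_of_bisim; simp_var; try bisim_Var.
    subst; apply bisim_sym.
    replace (c + j + k) with (j + (c + k)) by lia.
    apply (lift_lift_add _ _ 0); lia.
  - bisim_F_intro.
  - bisim_F_intro; left; eauto 10.
  - bisim_F_intro; left; exists (S c), (S (c + j + k)), (S (c + k)), v; repeat split; lia.
Qed.

Lemma subst_subst k j u v w :
  bisim (subst (j + k) u (subst j v w)) (subst j (subst k u v) (subst (S (j + k)) u w)).
Proof.
  apply (bisim_coind (fun x y => exists j kj w, kj = j + k /\
    x = subst kj u (subst j v w) /\ y = subst j (subst k u v) (subst (S kj) u w))); eauto 10.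
  clear; intros x y (j & kj & w & -> & -> & ->); destruct w; simp_struct.
  - apply bisim_F_of_bisim; simp_var; try bisim_Var.
    + subst; apply (subst_lift_comm 0).
    + apply bisim_sym, (subst_lift_cancel _ 0); lia.
  - bisim_F_intro.
  - bisim_F_intro; left; eauto 10.
  - bisim_F_intro; left; exists (S j), (S (j + k)), w; repeat split; lia.
Qed.

Lemma lift_subst d c j v w :
  bisim (lift d (j + c) (subst j v w)) (subst j (lift d c v) (lift d (S (j + c)) w)).
Proof.
  apply (bisim_coind (fun x y => exists j cj w, cj = j + c /\
    x = lift d cj (subst j v w) /\ y = subst j (lift d c v) (lift d (S cj) w))); eauto 10.
  clear; intros x y (j & cj & w & -> & -> & ->); destruct w; simp_struct.
  - apply bisim_F_of_bisim; simp_var; try bisim_Var.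
    subst; apply (lift_lift_comm _ _ _ 0).
  - bisim_F_intro.
  - bisim_F_intro; left; eauto 10.
  - bisim_F_intro; left; exists (S j), (S (j + c)), w; repeat split; lia.
Qed.

(** * Substitution does not create head normal forms *)

Inductive free_head (k : nat) : term -> Prop :=
| free_head_Var n : k <= n -> free_head k (Var n)
| free_head_App a b : free_head k a -> free_head k (App a b).

(* [inst k t t'] : [t'] is [t] with some subterms headed by a free variable
   replaced by arbitrary terms ([k] counts the binders passed).  Such a
   replacement can neither create a redex nor destroy a head normal form. *)
CoInductive inst : nat -> term -> term -> Prop :=
| inst_free k t t' : free_head k t -> inst k t t'
| inst_Var k n : inst k (Var n) (Var n)
| inst_Cst k x : inst k (Cst x) (Cst x)
| inst_App k a b a' b' : inst k a a' -> inst k b b' -> inst k (App a b) (App a' b')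
| inst_Lam k a a' : inst (S k) a a' -> inst k (Lam a) (Lam a').

Definition inst_F (Q : nat -> term -> term -> Prop) k t t' : Prop :=
  free_head k t \/
  (exists n, t = Var n /\ t' = Var n) \/
  (exists x, t = Cst x /\ t' = Cst x) \/
  (exists a1 a2 b1 b2, t = App a1 a2 /\ t' = App b1 b2 /\ Q k a1 b1 /\ Q k a2 b2) \/
  (exists a b, t = Lam a /\ t' = Lam b /\ Q (S k) a b).

Lemma inst_coind (P : nat -> term -> term -> Prop) :
  (forall k t t', P k t t' -> inst_F (fun k a b => P k a b \/ inst k a b) k t t') ->
  forall k t t', P k t t' -> inst k t t'.
Proof.
  intro HP; cofix CIH; intros k t t' H.
  destruct (HP k t t' H) as [Hf|[(n & -> & ->)|[(x & -> & ->)|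
    [(a1 & a2 & b1 & b2 & -> & -> & [H1|H1] & [H2|H2])|(a & b & -> & -> & [H1|H1])]]]];
    solve [constructor; auto].
Qed.

Lemma inst_F_of_inst Q k t t' : inst k t t' -> inst_F (fun k a b => Q k a b \/ inst k a b) k t t'.
Proof.
  destruct 1; unfold inst_F.
  - now left.
  - right; left; eauto.
  - right; right; left; eauto.
  - right; right; right; left; eauto 10.
  - right; right; right; right; eauto 10.
Qed.

Ltac inst_F_intro := unfold inst_F; first
  [ right; left; eexists; split; reflexivity
  | right; right; left; eexists; split; reflexivity
  | right; right; right; left; do 4 eexists; split; [reflexivity|split; [reflexivity|split]]
  | right; right; right; right; do 2 eexists; split; [reflexivity|split; [reflexivity|]] ].

Lemma inst_bisim_r k t t' t'' : inst k t t' -> bisim t' t'' -> inst k t t''.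
Proof.
  intros H1 H2; apply (inst_coind (fun k a c => exists b, inst k a b /\ bisim b c)); eauto.
  clear; intros k a c (b & [] & H2).
  - now left.
  - inversion H2; inst_F_intro.
  - inversion H2; inst_F_intro.
  - inversion H2; subst; inst_F_intro; left; eauto.
  - inversion H2; subst; inst_F_intro; left; eauto.
Qed.

Lemma free_head_lift k d c t : c <= k -> free_head k t -> free_head (k + d) (lift d c t).
Proof.
  intros Hc; induction 1.
  - rewrite lift_Var_ge by lia; constructor; lia.
  - rewrite lift_App; now constructor.
Qed.

Lemma inst_lift k d c t t' : inst k t t' -> c <= k -> inst (k + d) (lift d c t) (lift d c t').
Proof.
  intros H Hc; apply (inst_coind (fun kd x y => exists k c t t', kd = k + d /\ c <= k /\
    x = lift d c t /\ y = lift d c t' /\ inst k t t')); eauto 10.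
  clear; intros kd x y (k & c & t & t' & -> & Hc & -> & -> & H); destruct H; simp_struct.
  - left; now apply free_head_lift.
  - simp_var; inst_F_intro.
  - inst_F_intro.
  - inst_F_intro; left; eauto 10.
  - inst_F_intro; left; exists (S k), (S c), a, a'; repeat split; auto; lia.
Qed.

Lemma free_head_subst j i u t : free_head (S (j + i)) t -> free_head (j + i) (subst j u t).
Proof.
  remember (S (j + i)) as m; induction 1; subst.
  - rewrite subst_Var_gt by lia; constructor; lia.
  - rewrite subst_App; constructor; auto.
Qed.

Lemma inst_subst j i u u' t t' :
  inst (S (j + i)) t t' -> inst i u u' -> inst (j + i) (subst j u t) (subst j u' t').
Proof.
  intros H Hu; apply (inst_coind (fun ji x y => exists j t t', ji = j + i /\
    x = subst j u t /\ y = subst j u' t' /\ inst (S (j + i)) t t')); eauto 10.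
  clear H j t t'; intros ji x y (j & t & t' & -> & -> & -> & H); inversion H; subst; simp_struct.
  - left; now apply free_head_subst.
  - simp_var; try inst_F_intro.
    apply inst_F_of_inst; rewrite Nat.add_comm; apply inst_lift; auto; lia.
  - inst_F_intro.
  - inst_F_intro; left; eauto 10.
  - inst_F_intro; left; exists (S j), a, a'; repeat split; auto.
Qed.

Lemma inst_subst_self d k v t : inst d t (subst (d + k) v t).
Proof.
  apply (inst_coind (fun d x y => exists kd, kd = d + k /\ y = subst kd v x)); eauto.
  clear; intros d x y (kd & -> & ->); destruct x; simp_struct.
  - destruct (Nat.lt_ge_cases n d).
    + rewrite subst_Var_lt by lia; inst_F_intro.
    + left; now constructor.
  - inst_F_intro.
  - inst_F_intro; left; eauto.
  - inst_F_intro; left; exists (S (d + k)); split; auto; lia.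
Qed.

Lemma inst_lift_self d e c t : inst d t (lift e (d + c) t).
Proof.
  apply (inst_coind (fun d x y => exists cd, cd = d + c /\ y = lift e cd x)); eauto.
  clear; intros d x y (cd & -> & ->); destruct x; simp_struct.
  - destruct (Nat.lt_ge_cases n d).
    + simp_var; inst_F_intro.
    + left; now constructor.
  - inst_F_intro.
  - inst_F_intro; left; eauto.
  - inst_F_intro; left; exists (S (d + c)); split; auto; lia.
Qed.

Lemma inst_beta_step k t t' t'' : inst k t t' -> beta_step t' t'' ->
  inst k t t'' \/ exists t1, beta_step t t1 /\ inst k t1 t''.
Proof.
  intros H Hs; revert k t H.
  induction Hs as [s0 t0 (w' & b' & -> & Hb)|s0 s0' t0 _ IH|s0 s0' t0 _ IH|s0 s0' _ IH];
    intros k t H; inversion H; subst; try (left; now apply inst_free).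
  - match goal with Hw : inst k _ (Lam w') |- _ => inversion Hw; subst end.
    + left; apply inst_free; now constructor.
    + right; eexists; split.
      * apply compat_base; do 2 eexists; split; [reflexivity|apply bisim_refl].
      * eapply inst_bisim_r; [|apply bisim_sym; eassumption].
        now apply (inst_subst 0 k).
  - destruct (IH k _ ltac:(eassumption)) as [H1|(t1 & H1 & H2)].
    + left; now apply inst_App.
    + right; exists (App t1 b); split; [now apply compat_appl|now apply inst_App].
  - destruct (IH k _ ltac:(eassumption)) as [H1|(t1 & H1 & H2)].
    + left; now apply inst_App.
    + right; exists (App a t1); split; [now apply compat_appr|now apply inst_App].
  - destruct (IH _ _ ltac:(eassumption)) as [H1|(t1 & H1 & H2)].
    + left; now apply inst_Lam.
    + right; exists (Lam t1); split; [now apply compat_lam|now apply inst_Lam].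
Qed.

Lemma free_head_head_atom_app k t : free_head k t -> head_atom_app bot t.
Proof. induction 1; now constructor. Qed.

Lemma inst_head_atom_app k t t' : inst k t t' -> head_atom_app bot t' -> head_atom_app bot t.
Proof.
  intros H Hh; revert t H; induction Hh; intros t' Hi; inversion Hi; subst;
    solve [eapply free_head_head_atom_app; eauto | constructor; eauto].
Qed.

Lemma inst_hnf k t t' : inst k t t' -> hnf bot t' -> hnf bot t.
Proof.
  intros H Hh; revert k t H; induction Hh; intros k t' Hi.
  - apply hnf_base; eapply inst_head_atom_app; eauto.
  - inversion Hi; subst.
    + apply hnf_base; eapply free_head_head_atom_app; eauto.
    + apply hnf_lam; eauto.
Qed.

Lemma inst_has_hnf k t t' h : inst k t t' -> beta_star t' h -> hnf bot h -> has_hnf bot t.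
Proof.
  intros H Hs Hh; revert t H; induction Hs as [t' h Hb|t' t'' h Hstep _ IH]; intros t H.
  - exists t; split; [apply star_refl, bisim_refl|].
    eapply inst_hnf; [|eassumption]; eapply inst_bisim_r; eassumption.
  - destruct (inst_beta_step _ _ _ _ H Hstep) as [H1|(t1 & H1 & H2)]; auto.
    destruct (IH Hh _ H2) as (h' & Hs' & Hh'); exists h'; split; auto.
    now apply star_step with t1.
Qed.

Lemma has_hnf_subst_inv k v t : has_hnf bot (subst k v t) -> has_hnf bot t.
Proof. intros (h & Hs & Hh); exact (inst_has_hnf _ _ _ _ (inst_subst_self 0 k v t) Hs Hh). Qed.

Lemma has_hnf_lift_inv d c t : has_hnf bot (lift d c t) -> has_hnf bot t.
Proof. intros (h & Hs & Hh); exact (inst_has_hnf _ _ _ _ (inst_lift_self 0 d c t) Hs Hh). Qed.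

(** * Finite reduction is substitutive *)

Definition bisim_stable (R : term -> term -> Prop) : Prop :=
  forall a b a', R a b -> bisim a' a -> exists b', R a' b' /\ bisim b' b.

Lemma compat_bisim_stable R : bisim_stable R -> bisim_stable (compat R).
Proof.
  intros HR a b a' H; revert a'; induction H as [a b H|a a1 b _ IH|a a1 b _ IH|a a1 _ IH];
    intros a' Ha.
  - destruct (HR _ _ _ H Ha) as (b' & H1 & H2); exists b'; split; auto; now apply compat_base.
  - inversion Ha; subst; destruct (IH _ ltac:(eassumption)) as (b' & Hc & Hb).
    exists (App b' s2); split; [now apply compat_appl|now apply bisim_app].
  - inversion Ha; subst; destruct (IH _ ltac:(eassumption)) as (b' & Hc & Hb).
    exists (App s1 b'); split; [now apply compat_appr|now apply bisim_app].
  - inversion Ha; subst; destruct (IH _ ltac:(eassumption)) as (b' & Hc & Hb).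
    exists (Lam b'); split; [now apply compat_lam|now apply bisim_lam].
Qed.

Lemma star_bisim_l R a a' b :
  bisim_stable R -> star (compat R) a b -> bisim a' a -> star (compat R) a' b.
Proof.
  intros HR H; revert a'; induction H as [a b Hab|a a1 b Hstep _ IH]; intros a' Ha.
  - apply star_refl; eapply bisim_trans; eauto.
  - destruct (compat_bisim_stable R HR _ _ _ Hstep Ha) as (b' & H1 & H2).
    eapply star_step; eauto.
Qed.

Lemma star_trans R a b c :
  bisim_stable R -> star (compat R) a b -> star (compat R) b c -> star (compat R) a c.
Proof.
  intros HR H; induction H as [a b Hab|a a1 b Hstep _ IH]; intros Hc.
  - exact (star_bisim_l R _ _ _ HR Hc Hab).
  - eapply star_step; eauto.
Qed.

Lemma star_App_l R a a' b : star (compat R) a a' -> star (compat R) (App a b) (App a' b).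
Proof.
  induction 1.
  - apply star_refl, bisim_app; auto using bisim_refl.
  - eapply star_step; [apply compat_appl|]; eauto.
Qed.

Lemma star_App_r R a a' b : star (compat R) a a' -> star (compat R) (App b a) (App b a').
Proof.
  induction 1.
  - apply star_refl, bisim_app; auto using bisim_refl.
  - eapply star_step; [apply compat_appr|]; eauto.
Qed.

Lemma star_Lam R a a' : star (compat R) a a' -> star (compat R) (Lam a) (Lam a').
Proof.
  induction 1.
  - now apply star_refl, bisim_lam.
  - eapply star_step; [apply compat_lam|]; eauto.
Qed.

Lemma R_beta_bisim_stable : bisim_stable (@R_beta C).
Proof.
  intros a b a' (w & v & -> & Hb) Ha.
  inversion Ha as [| |? v' ? ? Hw Hv|]; subst; inversion Hw; subst.
  exists (subst0 s v'); split.
  - exists s, v'; split; auto using bisim_refl.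
  - eapply bisim_trans; [|apply bisim_sym; eassumption]; now apply subst_bisim.
Qed.

Lemma has_hnf_bisim a a' : bisim a' a -> has_hnf bot a' -> has_hnf bot a.
Proof.
  intros H (h & Hs & Hh); exists h; split; auto.
  eapply star_bisim_l; [apply R_beta_bisim_stable|eassumption|now apply bisim_sym].
Qed.

Lemma R_beta_bot_bisim_stable : bisim_stable (R_beta_bot bot).
Proof.
  intros a b a' [H|(Hnf & Hbot & ->)] Ha.
  - destruct (R_beta_bisim_stable _ _ _ H Ha) as (b' & H1 & H2).
    exists b'; split; auto; now left.
  - exists (Cst bot); split; [|apply bisim_refl].
    right; repeat split.
    + intro Hh; apply Hnf; eapply has_hnf_bisim; eauto.
    + intro Hb; apply Hbot; destruct a'; try contradiction.
      now inversion Ha; subst.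
Qed.

Lemma bb_star_trans a b c : bb_star bot a b -> bb_star bot b c -> bb_star bot a c.
Proof. apply star_trans, R_beta_bot_bisim_stable. Qed.

Lemma bb_star_beta a a' : R_beta a a' -> bb_star bot a a'.
Proof.
  intro H; apply star_step with a'; [now apply compat_base; left|apply star_refl, bisim_refl].
Qed.

Lemma bb_star_bot a : ~ has_hnf bot a -> ~ is_bot bot a -> bb_star bot a (Cst bot).
Proof.
  intros Hnf Hbot; apply star_step with (Cst bot); [|apply star_refl, bisim_refl].
  now apply compat_base; right.
Qed.

Lemma bb_step_lift d c u u' : bb_step bot u u' -> bb_star bot (lift d c u) (lift d c u').
Proof.
  intro H; revert c; induction H as [u u' [(w & v & -> & Hb)|(Hnf & Hbot & ->)]| | |];
    intro c; simp_struct; unfold bb_star, bb_step in *.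
  - eapply bb_star_trans; [apply bb_star_beta; do 2 eexists; split; [reflexivity|apply bisim_refl]|].
    apply star_refl, bisim_sym; eapply bisim_trans; [apply lift_bisim; eassumption|].
    apply (lift_subst _ _ 0).
  - apply bb_star_bot.
    + intro Hh; apply Hnf; eapply has_hnf_lift_inv; eassumption.
    + intro Hb; apply Hbot; destruct u; simp_struct; try (rewrite lift_Var in Hb; destruct (_ <? _)); easy.
  - now apply star_App_l.
  - now apply star_App_r.
  - now apply star_Lam.
Qed.

Lemma bb_star_lift d c u u' : bb_star bot u u' -> bb_star bot (lift d c u) (lift d c u').
Proof.
  induction 1 as [u u' H|u u1 u' Hstep _ IH].
  - now apply star_refl, lift_bisim.
  - eapply bb_star_trans; [apply bb_step_lift|]; eassumption.
Qed.

Lemma bb_step_subst k v u u' : bb_step bot u u' -> bb_star bot (subst k v u) (subst k v u').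
Proof.
  intro H; revert k; induction H as [u u' [(w & t & -> & Hb)|(Hnf & Hbot & ->)]| | |];
    intro k; simp_struct; unfold bb_star, bb_step in *.
  - eapply bb_star_trans; [apply bb_star_beta; do 2 eexists; split; [reflexivity|apply bisim_refl]|].
    apply star_refl, bisim_sym.
    eapply bisim_trans; [apply subst_bisim; [eassumption|apply bisim_refl]|].
    apply (subst_subst _ 0).
  - apply bb_star_bot.
    + intro Hh; apply Hnf; eapply has_hnf_subst_inv; eassumption.
    + (* only a variable can become [bot], and variables are head normal forms *)
      intro Hb; destruct u; simp_struct; try easy.
      apply Hnf; exists (Var n); split; [apply star_refl, bisim_refl|now do 2 constructor].
  - now apply star_App_l.
  - now apply star_App_r.
  - now apply star_Lam.
Qed.

Lemma bb_star_subst k v u u' : bb_star bot u u' -> bb_star bot (subst k v u) (subst k v u').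
Proof.
  induction 1 as [u u' H|u u1 u' Hstep _ IH].
  - now apply star_refl, subst_bisim; [|apply bisim_refl].
  - eapply bb_star_trans; [apply bb_step_subst|]; eassumption.
Qed.

Definition bb_inf_F (Q : term -> term -> Prop) t t' : Prop :=
  (exists n, t' = Var n /\ bb_star bot t (Var n)) \/
  (exists x, t' = Cst x /\ bb_star bot t (Cst x)) \/
  (exists a1 a2 b1 b2, t' = App b1 b2 /\ bb_star bot t (App a1 a2) /\ Q a1 b1 /\ Q a2 b2) \/
  (exists a b, t' = Lam b /\ bb_star bot t (Lam a) /\ Q a b).

Lemma bb_inf_coind (P : term -> term -> Prop) :
  (forall t t', P t t' -> bb_inf_F (fun a b => P a b \/ bb_inf bot a b) t t') ->
  forall t t', P t t' -> bb_inf bot t t'.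
Proof.
  intro HP; cofix CIH; intros t t' H.
  destruct (HP t t' H) as [(n & -> & Hs)|[(x & -> & Hs)|
    [(a1 & a2 & b1 & b2 & -> & Hs & [H1|H1] & [H2|H2])|(a & b & -> & Hs & [H1|H1])]]];
    solve [econstructor; eauto].
Qed.

Lemma bb_inf_F_of_bb_inf Q t t' :
  bb_inf bot t t' -> bb_inf_F (fun a b => Q a b \/ bb_inf bot a b) t t'.
Proof.
  destruct 1; unfold bb_inf_F.
  - left; eauto.
  - right; left; eauto.
  - right; right; left; eauto 10.
  - right; right; right; eauto 10.
Qed.

Ltac bb_inf_F_intro := unfold bb_inf_F; first
  [ left; eexists; split; [reflexivity|]
  | right; left; eexists; split; [reflexivity|]
  | right; right; left; do 4 eexists; split; [reflexivity|split; [|split]]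
  | right; right; right; do 2 eexists; split; [reflexivity|split] ].

Lemma bb_inf_bisim_r t t' t'' : bb_inf bot t t' -> bisim t' t'' -> bb_inf bot t t''.
Proof.
  intros H1 H2; apply (bb_inf_coind (fun a c => exists b, bb_inf bot a b /\ bisim b c)); eauto.
  clear; intros a c (b & [] & H2); inversion H2; subst; bb_inf_F_intro; eauto.
Qed.

Lemma bb_star_bb_inf t t1 t' : bb_star bot t t1 -> bb_inf bot t1 t' -> bb_inf bot t t'.
Proof.
  intros Hs H; revert Hs; destruct H; intro Hs;
    [apply inf_var|apply inf_cst|eapply inf_app|eapply inf_lam];
    try (eapply bb_star_trans; eassumption); eassumption.
Qed.

Lemma bb_inf_lift d c t t' : bb_inf bot t t' -> bb_inf bot (lift d c t) (lift d c t').
Proof.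
  intro H; apply (bb_inf_coind (fun x y => exists c t t',
    x = lift d c t /\ y = lift d c t' /\ bb_inf bot t t')); eauto 10.
  clear; intros x y (c & t & t' & -> & -> & H).
  destruct H as [t n Hs|t x Hs|t a1 a2 b1 b2 Hs H1 H2|t a b Hs H1];
    apply (bb_star_lift d c) in Hs; simp_struct.
  - rewrite lift_Var in *; destruct (n <? c); bb_inf_F_intro; auto.
  - bb_inf_F_intro; auto.
  - bb_inf_F_intro; eauto 10.
  - bb_inf_F_intro; eauto 10.
Qed.

Lemma bb_inf_subst k u u' v v' :
  bb_inf bot u u' -> bb_inf bot v v' -> bb_inf bot (subst k v u) (subst k v' u').
Proof.
  intros H Hv; apply (bb_inf_coind (fun x y => exists k u u',
    x = subst k v u /\ y = subst k v' u' /\ bb_inf bot u u')); eauto 10.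
  clear H k u u'; intros x y (k & u & u' & -> & -> & H).
  destruct H as [u n Hs|u x Hs|u a1 a2 b1 b2 Hs H1 H2|u a b Hs H1];
    apply (bb_star_subst k v) in Hs; simp_struct.
  - destruct (lt_eq_lt_dec n k) as [[Hn| ->]|Hn].
    + rewrite subst_Var_lt in * by assumption; bb_inf_F_intro; auto.
    + rewrite subst_Var_eq in *; apply bb_inf_F_of_bb_inf.
      eapply bb_star_bb_inf; [eassumption|]; now apply bb_inf_lift.
    + rewrite subst_Var_gt in * by assumption; bb_inf_F_intro; auto.
  - bb_inf_F_intro; auto.
  - bb_inf_F_intro; eauto 10.
  - bb_inf_F_intro; eauto 10.
Qed.

Lemma bb_inf_beta_step t s s' : bb_inf bot t s -> beta_step s s' -> bb_inf bot t s'.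
Proof.
  intros H Hs; revert t H.
  induction Hs as [s0 s0' (w & v & -> & Hb)|s0 s0' v _ IH|s0 s0' v _ IH|s0 s0' _ IH];
    intros t H; inversion H as [| |? t1 t2 ? ? Ht Ht1 Ht2|]; subst; eauto using bb_inf.
  inversion Ht1 as [| | |? r ? Hr Hrw]; subst.
  apply bb_inf_bisim_r with (subst0 w v); [|now apply bisim_sym].
  apply bb_star_bb_inf with (subst0 r t2); [|now apply bb_inf_subst].
  eapply bb_star_trans; [eassumption|].
  eapply bb_star_trans; [apply star_App_l; eassumption|].
  apply bb_star_beta; do 2 eexists; split; [reflexivity|apply bisim_refl].
Qed.

End InfinitaryBeta.

Theorem corollary5p33 (C : Type) (bot : C) (t s r : term C) :
  bb_inf bot t s -> beta_star s r -> bb_inf bot t r.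
Proof.
  intros Hts Hsr; revert t Hts.
  induction Hsr as [s r Hsr|s s1 r Hstep _ IH]; intros t Hts.
  - now apply bb_inf_bisim_r with s.
  - apply IH; now apply bb_inf_beta_step with s.
Qed.
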